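(* If $G$ is a $t$-clique-sum of graphs $G_1$ and $G_2$ and $r\in\mathbb{N}$, then $\xi_{[r]}(G)=\max\{\xi_{[r]}(G_1),\xi_{[r]}(G_2)\}$.
   Context: A $t$-clique-sum of $G_1$ and $G_2$ is the graph $G=G_1\cup G_2$ (vertex and edge sets the unions) where $G_1$ and $G_2$ intersect exactly in a complete graph $K_t$ (i.e. $V(G_1)\cap V(G_2)$ has $t$ vertices, pairwise adjacent in both, and $G_1,G_2$ are induced subgraphs of $G$). A $(d;r)$ orthogonal subspace representation of $G$ is a family $\{S_u\}_{u\in V(G)}$ of $r$-dimensional subspaces of $\mathbb{C}^d$ with $S_u\perp S_v$ whenever $uv\in E(G)$; $\xi_{[r]}(G)$ is the least $d$ for which one exists. *)

From HB Require Import structures.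
From mathcomp Require Import all_boot all_order all_algebra.
From Stdlib Require Import ClassicalEpsilon.
Set Implicit Arguments. Unset Strict Implicit. Unset Printing Implicit Defensive.
Import Order.TTheory GRing.Theory Num.Theory.
Local Open Scope ring_scope.

Definition simple_graph (V : finType) (e : rel V) : Prop :=
  symmetric e /\ irreflexive e.

Definition mx_orth (C : numClosedFieldType) (r d : nat) (A B : 'M[C]_(r, d)) : Prop :=
  A *m (map_mx (@Num.conj C) B)^T = 0.

(* (d;r) orthogonal subspace representation: each vertex u gets an
   r-dimensional subspace S_u of C^d (the row space of a rank-r r x d
   matrix), with S_u ⟂ S_v for every edge uv. *)
Definition orth_subspace_rep (C : numClosedFieldType) (V : finType) (e : rel V)
    (d r : nat) : Prop :=
  exists S : V -> 'M[C]_(r, d),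
    (forall u, \rank (S u) = r) /\
    (forall u v, e u v -> mx_orth (S u) (S v)).

Definition xi_r (C : numClosedFieldType) (V : finType) (e : rel V) (r : nat) : nat :=
  epsilon (inhabits 0%N)
    (fun d => orth_subspace_rep C e d r /\
              forall d', orth_subspace_rep C e d' r -> (d <= d')%N).

Definition induced (T : finType) (e : rel T) (A : {set T}) : rel {x : T | x \in A} :=
  fun x y => e (val x) (val y).
Arguments induced {T} e A.

Definition clique_sum (T : finType) (e : rel T) (V1 V2 : {set T}) (t : nat) : Prop :=
  V1 :|: V2 = setT /\
  #|V1 :&: V2| = t /\
  (forall x y, x \in V1 :&: V2 -> y \in V1 :&: V2 -> x != y -> e x y) /\
  (forall x y, e x y -> (x \in V1) && (y \in V1) || (x \in V2) && (y \in V2)).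

From HB Require Import structures.
From mathcomp Require Import all_boot all_order all_algebra.
From mathcomp Require Import sesquilinear spectral.
From Stdlib Require Import ClassicalEpsilon.
Set Implicit Arguments. Unset Strict Implicit. Unset Printing Implicit Defensive.
Import Order.TTheory GRing.Theory Num.Theory.
Local Open Scope ring_scope.
Local Open Scope sesquilinear_scope.

(* A representation of G restricts to representations of G1 and G2, which gives
   the inequality >=.  Conversely, pad representations of G1 and G2 with zero
   coordinates to a common dimension d.  On the clique K = V1 :&: V2 both assign
   pairwise orthogonal r-dimensional subspaces; stacking orthonormal bases of
   them gives two matrices with orthonormal rows, so some unitary U of C^d
   carries the second family onto the first.  Moving every subspace of the
   second representation by U preserves its orthogonalities, agrees with the
   first one on K, and every edge of G between V1 and V2 :\: V1 ends in K, so
   the two representations glue into one of G. *)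

Section UnitaryTransport.
Variable C : numClosedFieldType.

Local Notation "A ^!" := (orthomx Num.conj (hermitian1mx _) A) : matrix_set_scope.

Lemma trmxC_mul m n p (A : 'M[C]_(m, n)) (B : 'M[C]_(n, p)) :
  (A *m B)^t* = B^t* *m A^t*.
Proof. by rewrite trmx_mul map_mxM. Qed.

Lemma orth_sym m p n (A : 'M[C]_(m, n)) (B : 'M[C]_(p, n)) :
  A *m B^t* = 0 -> B *m A^t* = 0.
Proof. by move=> AB; rewrite -[B]trmxCK -trmxC_mul AB trmx0 map_mx0. Qed.

Lemma orth_submx m m' p p' n (A : 'M[C]_(m, n)) (A' : 'M[C]_(m', n))
    (B : 'M[C]_(p, n)) (B' : 'M[C]_(p', n)) :
  (A <= A')%MS -> (B <= B')%MS -> A' *m B'^t* = 0 -> A *m B^t* = 0.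
Proof.
move=> /submxP[D ->] /submxP[E ->] A'B'.
by rewrite trmxC_mul mulmxA -(mulmxA D) A'B' mulmx0 mul0mx.
Qed.

Lemma schmidt_eqmx m n (A : 'M[C]_(m, n)) : \rank A = m -> (schmidt A :=: A)%MS.
Proof. by move=> rkA; apply: eqmx_schmidt_free; rewrite /row_free rkA. Qed.

Lemma unitary_mulmx_orth m p d (U : 'M[C]_d)
    (A : 'M[C]_(m, d)) (B : 'M[C]_(p, d)) :
  U \is unitarymx -> (A *m U) *m (B *m U)^t* = A *m B^t*.
Proof.
by move=> /unitarymxP UU; rewrite trmxC_mul mulmxA -(mulmxA A) UU mulmx1.
Qed.

Lemma col_mx_unitary m1 m2 n (A : 'M[C]_(m1, n)) (B : 'M[C]_(m2, n)) :
  A \is unitarymx -> B \is unitarymx -> A *m B^t* = 0 ->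
  col_mx A B \is unitarymx.
Proof.
move=> /unitarymxP AA /unitarymxP BB AB; apply/unitarymxP.
rewrite tr_col_mx map_row_mx mul_col_row AA BB AB (orth_sym AB).
by rewrite -scalar_mx_block.
Qed.

Lemma unitary_complement m d (X : 'M[C]_(m, d)) : X \is unitarymx ->
  exists2 P : 'M[C]_(d - m, d), P \is unitarymx & X *m P^t* = 0.
Proof.
move=> Xu.
have rkO : \rank X^!%MS = (d - m)%N by rewrite rank_ortho mxrank_unitary.
rewrite -rkO; exists (schmidt (row_base X^!%MS)).
  by rewrite schmidt_unitarymx ?rank_leq_col.
apply/orthomx1P; rewrite orthomx_sym.
by rewrite eqmx_schmidt_free ?row_base_free // eq_row_base.
Qed.

Lemma unitary_extension m d (X Y : 'M[C]_(m, d)) :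
  X \is unitarymx -> Y \is unitarymx ->
  exists2 U : 'M[C]_d, U \is unitarymx & X *m U = Y.
Proof.
move=> Xu Yu; have md : (m <= d)%N by rewrite -(mxrank_unitary Xu) rank_leq_col.
have [P Pu XP] := unitary_complement Xu; have [Q Qu YQ] := unitary_complement Yu.
(* Complete [X] and [Y] to square unitaries; [U] maps the first to the second. *)
have EXu := col_mx_unitary Xu Pu XP; have EYu := col_mx_unitary Yu Qu YQ.
exists ((col_mx X P)^t* *m col_mx Y Q).
  apply/unitarymxP; rewrite trmxC_mul trmxCK mulmxA mulmxtVK //.
  by rewrite -[_^t*]mul1mx mulmxKtV ?subnKC.
have : col_mx X P *m ((col_mx X P)^t* *m col_mx Y Q) = col_mx Y Q.
  by rewrite mulmxA (unitarymxP EXu) mul1mx.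
by rewrite mul_col_mx => /eq_col_mx[].
Qed.

Section Families.
Variables (I : finType) (r d : nat).
Implicit Types B S : I -> 'M[C]_(r, d).

Definition orthogonal_family S := forall i j, i != j -> S i *m (S j)^t* = 0.

Definition orthonormal_family B :=
  (forall i, B i \is unitarymx) /\ orthogonal_family B.

(* Row [enum_rank (a, i)] of [stackmx B] is row [a] of [B i]. *)
Definition stackmx B : 'M[C]_(#|{: 'I_r * I}|, d) :=
  \matrix_(k, j) B (enum_val k).2 (enum_val k).1 j.

Lemma stackmxM B (U : 'M[C]_d) : stackmx B *m U = stackmx (fun i => B i *m U).
Proof.
by apply/matrixP => k j; rewrite !mxE; apply: eq_bigr => l _; rewrite mxE.
Qed.

Lemma stackmx_inj B B' : stackmx B = stackmx B' -> forall i, B i = B' i.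
Proof.
move=> eqB i; apply/matrixP => a j.
have := congr1 (fun M : 'M[C]_(_, d) => M (enum_rank (a, i)) j) eqB.
by rewrite !mxE enum_rankK.
Qed.

Lemma stackmx_gram B a i a' i' :
  (stackmx B *m (stackmx B)^t*) (enum_rank (a, i)) (enum_rank (a', i')) =
  (B i *m (B i')^t*) a a'.
Proof. by rewrite !mxE; apply: eq_bigr => j _; rewrite !mxE !enum_rankK. Qed.

Lemma stackmx_unitaryE B : stackmx B \is unitarymx <-> orthonormal_family B.
Proof.
have gram_rank a i a' i' : (1%:M : 'M[C]_#|{: 'I_r * I}|)
    (enum_rank (a, i)) (enum_rank (a', i')) = ((a == a') && (i == i'))%:R.
  by rewrite mxE (inj_eq enum_rank_inj) xpair_eqE.
split=> [/unitarymxP BB | [Bu Bo]].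
  split=> [i | i i' ii']; [apply/unitarymxP | ]; apply/matrixP => a a';
    rewrite -stackmx_gram BB gram_rank.
    by rewrite eqxx andbT mxE.
  by rewrite (negbTE ii') andbF mxE.
apply/unitarymxP/matrixP => k l.
rewrite -(enum_valK k) -(enum_valK l).
case: (enum_val k) => a i; case: (enum_val l) => a' i'.
rewrite stackmx_gram gram_rank; case: (eqVneq i i') => [<- | ii'].
  by rewrite (unitarymxP (Bu i)) mxE andbT.
by rewrite Bo // mxE andbF.
Qed.

Lemma orthonormal_family_transport B1 B2 :
  orthonormal_family B1 -> orthonormal_family B2 ->
  exists2 U : 'M[C]_d, U \is unitarymx & forall i, B2 i *m U = B1 i.
Proof.
move=> /stackmx_unitaryE B1u /stackmx_unitaryE B2u.
have [U Uu] := unitary_extension B2u B1u.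
by rewrite stackmxM => /stackmx_inj; exists U.
Qed.

Lemma schmidt_orthonormal_family S :
  (forall i, \rank (S i) = r) -> orthogonal_family S ->
  orthonormal_family (fun i => schmidt (S i)).
Proof.
move=> rkS So; split=> [i | i j ij].
  by rewrite schmidt_unitarymx // -{1}(rkS i) rank_leq_col.
by apply: (orth_submx _ _ (So i j ij)); rewrite schmidt_eqmx.
Qed.

Lemma orthogonal_family_transport S1 S2 :
  (forall i, \rank (S1 i) = r) -> orthogonal_family S1 ->
  (forall i, \rank (S2 i) = r) -> orthogonal_family S2 ->
  exists2 U : 'M[C]_d, U \is unitarymx & forall i, (S2 i *m U :=: S1 i)%MS.
Proof.
move=> rk1 o1 rk2 o2.
have [U Uu BU] := orthonormal_family_transport (schmidt_orthonormal_family rk1 o1)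
  (schmidt_orthonormal_family rk2 o2).
exists U => // i.
apply: eqmx_trans (eqmxMr U (eqmx_sym (schmidt_eqmx (rk2 i)))) _.
by rewrite BU; apply: schmidt_eqmx.
Qed.

End Families.
End UnitaryTransport.

Section Representations.
Variable C : numClosedFieldType.

Lemma mx_orthE r d (A B : 'M[C]_(r, d)) : mx_orth A B = (A *m B^t* = 0).
Proof. by rewrite /mx_orth map_trmx. Qed.

Lemma orth_subspace_rep_exists (T : finType) (e : rel T) r :
  irreflexive e -> exists d, orth_subspace_rep C e d r.
Proof.
move=> irr; pose E u : 'M[C]_(r, #|{: 'I_r * T}|) :=
  \matrix_(a, j) (j == enum_rank (a, u))%:R.
have [Eu Eo] : orthonormal_family E.
  apply/stackmx_unitaryE; apply/unitarymxP.
  have -> : stackmx E = 1%:M.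
    by apply/matrixP => k j; rewrite !mxE -surjective_pairing enum_valK eq_sym.
  by rewrite trmx1 map_mx1 mulmx1.
exists #|{: 'I_r * T}|, E; split=> [u | u v uv]; first exact: mxrank_unitary.
by rewrite mx_orthE Eo //; apply: contraTneq uv => ->; rewrite irr.
Qed.

Lemma orth_subspace_rep_widen (T : finType) (e : rel T) r d d' :
  (d <= d')%N -> orth_subspace_rep C e d r -> orth_subspace_rep C e d' r.
Proof.
move=> le_dd' [S [rkS So]]; rewrite -(subnKC le_dd').
exists (fun u => row_mx (S u) (0 : 'M[C]_(r, d' - d))).
split=> [u | u v uv]; first by rewrite rank_row_mx0 rkS.
have := So u v uv; rewrite !mx_orthE => SuSv.
by rewrite tr_row_mx map_col_mx mul_row_col trmx0 map_mx0 mulmx0 addr0.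
Qed.

Lemma orth_subspace_rep_induced (T : finType) (e : rel T) (A : {set T}) r d :
  orth_subspace_rep C e d r -> orth_subspace_rep C (induced e A) d r.
Proof.
by move=> [S [rkS So]]; exists (fun x => S (val x)); split=> // x y /So.
Qed.

Definition orth_rep_on (T : finType) (e : rel T) (A : {set T}) r d
    (S : T -> 'M[C]_(r, d)) :=
  (forall x, x \in A -> \rank (S x) = r) /\
  (forall x y, x \in A -> y \in A -> e x y -> S x *m (S y)^t* = 0).

Lemma orth_rep_onS (T : finType) (e : rel T) (A B : {set T}) r d S :
  A \subset B -> @orth_rep_on T e B r d S -> orth_rep_on e A S.
Proof.
move=> /subsetP AB [rkS So].
by split=> [x /AB | x y /AB xB /AB yB]; [apply: rkS | apply: So].
Qed.

Lemma induced_rep_extend (T : finType) (e : rel T) (A : {set T}) r d :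
  orth_subspace_rep C (induced e A) d r ->
  exists S : T -> 'M[C]_(r, d), orth_rep_on e A S.
Proof.
move=> [S [rkS So]]; exists (fun x => if insub x is Some y then S y else 0).
split=> [x xA | x y xA yA xy]; rewrite ?insubT //.
by rewrite -mx_orthE; apply: So.
Qed.

Lemma clique_transport (T : finType) (e : rel T) (K : {set T}) r d
    (S1 S2 : T -> 'M[C]_(r, d)) :
  (forall x y, x \in K -> y \in K -> x != y -> e x y) ->
  orth_rep_on e K S1 -> orth_rep_on e K S2 ->
  exists2 U : 'M[C]_d, U \is unitarymx &
    forall x, x \in K -> (S2 x *m U :=: S1 x)%MS.
Proof.
move=> clK [rk1 o1] [rk2 o2].
pose restrict (S : T -> 'M[C]_(r, d)) (x : {x | x \in K}) := S (val x).
have orth_restrict S : (forall x y, x \in K -> y \in K -> e x y ->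
    S x *m (S y)^t* = 0) -> orthogonal_family (restrict S).
  move=> So x y xy; apply: So; rewrite ?(valP x) ?(valP y) //.
  by apply: clK; rewrite ?(valP x) ?(valP y) ?(inj_eq val_inj).
have [U Uu SU] := orthogonal_family_transport
  (fun x => rk1 _ (valP x)) (orth_restrict _ o1)
  (fun x => rk2 _ (valP x)) (orth_restrict _ o2).
by exists U => // x xK; apply: (SU (Sub x xK)).
Qed.

Lemma clique_sum_rep (T : finType) (e : rel T) (V1 V2 : {set T}) t r d :
  symmetric e -> clique_sum e V1 V2 t ->
  orth_subspace_rep C (induced e V1) d r ->
  orth_subspace_rep C (induced e V2) d r -> orth_subspace_rep C e d r.
Proof.
move=> sym_e [cover [_ [clique edges]]].
move=> /induced_rep_extend[S1 rep1] /induced_rep_extend[S2 rep2].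
have [U Uu S2U] := clique_transport clique
  (orth_rep_onS (subsetIl V1 V2) rep1) (orth_rep_onS (subsetIr V1 V2) rep2).
case: rep1 rep2 => [rk1 o1] [rk2 o2].
have notV1 x : x \notin V1 -> x \in V2.
  move=> xV1; have : x \in V1 :|: V2 by rewrite cover inE.
  by rewrite inE (negbTE xV1).
have edge_out x y : x \in V1 -> y \notin V1 -> e x y -> x \in V1 :&: V2.
  move=> xV1 yV1 xy; rewrite inE xV1.
  by case/orP: (edges _ _ xy) => /andP[] // _; rewrite (negbTE yV1).
have cross x y : x \in V1 -> y \notin V1 -> e x y ->
    S1 x *m (S2 y *m U)^t* = 0.
  move=> xV1 yV1 xy; have xK := edge_out _ _ xV1 yV1 xy.
  have S1_sub : (S1 x <= S2 x *m U)%MS by rewrite (S2U x xK).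
  apply: (orth_submx S1_sub (submx_refl _)).
  rewrite unitary_mulmx_orth //; apply: o2 (notV1 _ yV1) xy.
  by case/setIP: xK.
exists (fun x => if x \in V1 then S1 x else S2 x *m U); split=> [x | x y xy].
  case: ifPn => [/rk1 // | /notV1/rk2 rkS2].
  by rewrite mxrankMfree // /row_free mxrank_unitary.
rewrite mx_orthE; case: ifPn => xV1; case: ifPn => yV1.
- exact: o1.
- exact: cross.
- by apply: orth_sym; apply: cross; rewrite // sym_e.
- by rewrite unitary_mulmx_orth //; apply: o2; rewrite ?notV1.
Qed.

Lemma xi_rP (T : finType) (e : rel T) r d0 :
  orth_subspace_rep C e d0 r ->
  orth_subspace_rep C e (xi_r C e r) r /\
  forall d, orth_subspace_rep C e d r -> (xi_r C e r <= d)%N.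
Proof.
move=> rep0; apply: (epsilon_spec (inhabits 0%N) (fun d =>
  orth_subspace_rep C e d r /\
  forall d', orth_subspace_rep C e d' r -> (d <= d')%N)).
(* [ex_minn] needs a boolean predicate, decided here by excluded middle. *)
pose P n := if excluded_middle_informative (orth_subspace_rep C e n r)
  then true else false.
have PP n : P n <-> orth_subspace_rep C e n r.
  by rewrite /P; case: excluded_middle_informative.
have exP : exists n, P n by exists d0; apply/PP.
exists (ex_minn exP); case: ex_minnP => m /PP Pm m_min.
by split=> // d /PP; apply: m_min.
Qed.

End Representations.

Theorem mainTheorem14 (C : numClosedFieldType) (T : finType) (e : rel T)
    (V1 V2 : {set T}) (t r : nat) :
  simple_graph e ->
  clique_sum e V1 V2 t ->
  xi_r C e r = maxn (xi_r C (induced e V1) r) (xi_r C (induced e V2) r).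
Proof.
move=> [sym_e irr_e] cs.
have [d0 rep0] := orth_subspace_rep_exists C r irr_e.
have [repG minG] := xi_rP rep0.
have [rep1 min1] := xi_rP (orth_subspace_rep_induced V1 repG).
have [rep2 min2] := xi_rP (orth_subspace_rep_induced V2 repG).
apply/anti_leq/andP; split.
  apply: minG; apply: (clique_sum_rep sym_e cs).
    by apply: orth_subspace_rep_widen rep1; rewrite leq_maxl.
  by apply: orth_subspace_rep_widen rep2; rewrite leq_maxr.
by rewrite geq_max min1 ?min2 //; apply: orth_subspace_rep_induced.
Qed.
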